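(* Let $\Sigma$ be an alphabet with $|\Sigma|=1$ and let $L\subseteq\Sigma^*$ be a language satisfying the Pumping Lemma for context-free languages, i.e. the property $\mathit{PL}(L)$ below holds. Then $L$ is a regular language. Here $\mathit{PL}(L)$ is the property: there exists $n>0$ such that for every $z\in L$ with $|z|\ge n$ there exist $u,v,w,x,y\in\Sigma^*$ such that (1) $z=uvwxy$, (2) $vx\neq\varepsilon$, (3) $|vwx|\le n$, and (4) for all $i\ge 0$, $u v^i w x^i y\in L$.
   Context: For a word $w$, $|w|$ denotes its length, $w^0=\varepsilon$ is the empty word and $w^{i+1}=w^i w$. No assumption is made that $L$ is context-free; only the property $\mathit{PL}(L)$ is assumed. *)

From mathcomp Require Import all_boot.
Set Implicit Arguments. Unset Strict Implicit. Unset Printing Implicit Defensive.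

(* Words over an alphabet Sigma are sequences [seq Sigma]; a language is an
   arbitrary predicate (not necessarily decidable) on words. *)

Fixpoint wpow (Sigma : Type) (w : seq Sigma) (i : nat) : seq Sigma :=
  match i with
  | 0 => [::]
  | i'.+1 => wpow w i' ++ w
  end.

Definition PL (Sigma : Type) (L : seq Sigma -> Prop) : Prop :=
  exists n : nat, 0 < n /\
    forall z : seq Sigma, L z -> n <= size z ->
      exists u v w x y : seq Sigma,
        [/\ z = u ++ v ++ w ++ x ++ y,
            v ++ x <> [::],
            size (v ++ w ++ x) <= n &
            forall i : nat, L (u ++ wpow v i ++ w ++ wpow x i ++ y)].

Record dfa (Sigma : finType) := DFA {
  dfa_state : finType;
  dfa_start : dfa_state;
  dfa_trans : dfa_state -> Sigma -> dfa_state;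
  dfa_final : pred dfa_state }.

Arguments dfa_start {Sigma} _.
Arguments dfa_trans {Sigma} _ _ _.
Arguments dfa_final {Sigma} _ _.

Definition dfa_accepts (Sigma : finType) (A : dfa Sigma) (w : seq Sigma) : bool :=
  dfa_final A (foldl (dfa_trans A) (dfa_start A) w).

Definition regular (Sigma : finType) (L : seq Sigma -> Prop) : Prop :=
  exists A : dfa Sigma, forall w : seq Sigma, L w <-> dfa_accepts A w.

(* Over a one-letter alphabet a word is determined by its length, so L is
   described by the set S of lengths of its words.  Pumping a word of length
   k >= n adds a multiple of some p in (0, n] to its length, and p divides n!,
   so S is closed under k |-> k + n! beyond n.  In each residue class modulo
   n! the set S is therefore eventually empty or eventually full, and S is
   eventually periodic; an automaton counting lengths up to the period then
   recognizes L. *)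
From mathcomp Require Import all_boot.
From mathcomp Require Import zify.
From Stdlib Require Import Classical ClassicalDescription.
Set Implicit Arguments. Unset Strict Implicit.

Lemma eventually_forall_ltn (Q : nat -> nat -> Prop) m :
  (forall i, i < m -> exists N, forall j, N <= j -> Q i j) ->
  exists N, forall i j, i < m -> N <= j -> Q i j.
Proof.
elim: m => [|m IH] hQ; first by exists 0.
have [N HN] := IH (fun i lt_im => hQ i (ltnW lt_im)).
have [N' HN'] := hQ m (ltnSn m).
exists (maxn N N') => i j; rewrite ltnS leq_eqVlt geq_max => /orP[/eqP -> | lt_im].
  by case/andP=> _; apply: HN'.
by case/andP=> le_Nj _; apply: HN.
Qed.

Lemma periodic_addMn (S : nat -> Prop) M P :
  (forall k, M <= k -> (S k <-> S (k + P))) ->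
  forall j k, M <= k -> (S (k + j * P) <-> S k).
Proof.
move=> HM; elim=> [|j IH] k le_Mk; first by rewrite mul0n addn0.
by rewrite mulSnr addnA -HM ?IH //; lia.
Qed.

Section EventuallyPeriodic.

Variables (S : nat -> Prop) (n P : nat).
Hypothesis P_gt0 : 0 < P.
Hypothesis S_addP : forall k, n <= k -> S k -> S (k + P).

Lemma closed_addMn j k : n <= k -> S k -> S (k + j * P).
Proof.
elim: j k => [|j IH] k le_nk Sk; first by rewrite mul0n addn0.
rewrite mulSn addnA; apply: IH; [lia | exact: S_addP].
Qed.

(* Beyond [n] each residue class is upward closed under [+ P], hence is
   eventually either empty or full. *)
Lemma progression_eventually_const k0 :
  exists N, forall j, N <= j -> (S (k0 + j * P) <-> S (k0 + j.+1 * P)).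
Proof.
case: (classic (exists j, n <= k0 + j * P /\ S (k0 + j * P))) => [[j [le_n Sj]] | none].
  have full j' : j <= j' -> S (k0 + j' * P).
    move=> le_jj'; have -> : k0 + j' * P = k0 + j * P + (j' - j) * P.
      by rewrite -addnA -mulnDl subnKC.
    exact: closed_addMn.
  by exists j => j' le_jj'; split=> _; apply: full; lia.
have le_mulP i : i <= i * P by rewrite leq_pmulr.
exists n => j le_nj; split=> Sj; case: none.
  by exists j; split=> //; have := le_mulP j; lia.
by exists j.+1; split=> //; have := le_mulP j.+1; lia.
Qed.

Lemma eventually_periodic : exists M, forall k, M <= k -> (S k <-> S (k + P)).
Proof.
have [N HN] := @eventually_forall_ltn (fun i j => S (i + j * P) <-> S (i + j.+1 * P))
  P (fun i _ => progression_eventually_const i).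
exists (N * P) => k le_k.
have le_N : N <= k %/ P by rewrite -(mulnK N P_gt0) leq_div2r.
have := HN _ _ (ltn_pmod k P_gt0) le_N.
by rewrite mulSn addnCA !(addnC (k %% P)) -divn_eq addnC.
Qed.

End EventuallyPeriodic.

Section PeriodRepresentative.

Variables (M P : nat).
Hypothesis P_gt0 : 0 < P.

(* The canonical representative of [k] in [0, M + P) for a set of naturals
   that is [P]-periodic from [M] on. *)
Definition period_rep k := if k < M then k else M + (k - M) %% P.

Lemma period_rep_lt k : period_rep k < M + P.
Proof.
rewrite /period_rep; case: (ltnP k M) => [lt_kM | _]; first lia.
have := ltn_pmod (k - M) P_gt0; lia.
Qed.

Lemma period_repS k : period_rep (period_rep k).+1 = period_rep k.+1.
Proof.
rewrite /period_rep; case: (ltnP k M) => // le_Mk.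
rewrite !ifF; try lia.
by rewrite -addnS addKn subSn // -addn1 modnDml addn1.
Qed.

Lemma period_repE (S : nat -> Prop) :
  (forall k, M <= k -> (S k <-> S (k + P))) -> forall k, S (period_rep k) <-> S k.
Proof.
move=> HM k; rewrite /period_rep; case: (ltnP k M) => // le_Mk.
rewrite -(periodic_addMn HM ((k - M) %/ P)) ?leq_addr //.
by rewrite -addnA [_ %% P + _]addnC -divn_eq subnKC.
Qed.

End PeriodRepresentative.

Lemma regular_of_size_periodic (Sigma : finType) (L : seq Sigma -> Prop)
    (S : nat -> Prop) M P :
  0 < P -> (forall k, M <= k -> (S k <-> S (k + P))) ->
  (forall z, L z <-> S (size z)) -> regular L.
Proof.
move=> P_gt0 HM LS.
pose state := 'I_(M + P).
have rep_lt k : period_rep M P k < M + P by exact: period_rep_lt.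
pose rep k : state := Ordinal (rep_lt k).
pose step (s : state) (_ : Sigma) := rep s.+1.
pose final (s : state) : bool := if excluded_middle_informative (S s) then true else false.
exists (DFA (rep 0) step final) => z.
have run_rep : foldl step (rep 0) z = rep (size z).
  elim/last_ind: z => [|z b IH]; first by [].
  by rewrite foldl_rcons IH size_rcons; apply: val_inj; rewrite /= period_repS.
rewrite /dfa_accepts /= run_rep LS -(period_repE HM) /final.
by case: excluded_middle_informative.
Qed.

Lemma PL_size_pump (Sigma : Type) (L : seq Sigma -> Prop) : PL L ->
  exists2 n, 0 < n & forall z, L z -> n <= size z ->
    exists2 p, 0 < p <= n & forall j, exists2 z', L z' & size z' = size z + j * p.
Proof.
case=> n [n_gt0 pump]; exists n => // z Lz le_nz.
have [u [v [w [x [y [-> vx_neq0 vwx_le pumpi]]]]]] := pump z Lz le_nz.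
have size_wpow (s : seq Sigma) i : size (wpow s i) = i * size s.
  by elim: i => //= i IH; rewrite size_cat IH mulSnr.
have vx_gt0 : 0 < size v + size x.
  by case: v x vx_neq0 {vwx_le pumpi} => [|? ?] [|? ?].
exists (size v + size x); first by move: vwx_le; rewrite !size_cat; lia.
move=> j; exists (u ++ wpow v j.+1 ++ w ++ wpow x j.+1 ++ y) => //.
rewrite !size_cat !size_wpow; nia.
Qed.

Lemma card_le1_seq_eq (Sigma : finType) (z1 z2 : seq Sigma) :
  #|Sigma| <= 1 -> size z1 = size z2 -> z1 = z2.
Proof.
move/card_le1_eqP => all_eq.
elim: z1 z2 => [|a z1 IH] [|b z2] //= [/IH ->].
by rewrite (all_eq a b).
Qed.

Theorem theorem1 (Sigma : finType) (L : seq Sigma -> Prop)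
  (hSigma : #|Sigma| = 1) (hPL : PL L) : regular L.
Proof.
have [n n_gt0 pump] := PL_size_pump hPL.
pose S k := exists2 z : seq Sigma, L z & size z = k.
have LS z : L z <-> S (size z).
  split=> [Lz | [z' Lz' size_z']]; first by exists z.
  by rewrite -(card_le1_seq_eq _ size_z') ?hSigma.
have S_add_fact k : n <= k -> S k -> S (k + n`!).
  move=> le_nk [z Lz size_z]; subst k.
  have [p /andP[p_gt0 le_pn] pumpj] := pump z Lz le_nk.
  have p_dvd : p %| n`! by apply: dvdn_fact; rewrite p_gt0.
  by rewrite -(divnK p_dvd); apply: pumpj.
have [M HM] := eventually_periodic (fact_gt0 n) S_add_fact.
exact: regular_of_size_periodic (fact_gt0 n) HM LS.
Qed.
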